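(* Let $\mathcal{R}$ be a right amenable cell space with finite stabiliser $G_0$, let $Q$ be a finite nonempty set, and let $\mathcal{F}=(F_i)_{i\in I}$ be a right Følner net in $\mathcal{R}$. Let $X\subseteq Q^M$ and let $E$ be a finite subset of $G/G_0$ with $G_0\in E$. Then $\mathrm{h}_{(F_i^{+E})_{i\in I}}(X)\leq\mathrm{h}_{\mathcal{F}}(X)$.
   Context: A cell space $\mathcal{R}$ consists of a group $G$ acting transitively on the left on a nonempty set $M$ via $\triangleright$, a point $m_0\in M$ and a family $(g_{m_0,m})_{m\in M}$ in $G$ with $g_{m_0,m}\triangleright m_0=m$. $G_0$ is the stabiliser of $m_0$ and $G/G_0$ the set of left cosets. The right semi-action $\triangleleft\colon M\times G/G_0\to M$ is $m\triangleleft gG_0=g_{m_0,m}g\triangleright m_0$; $m\triangleleft E=\{m\triangleleft e:e\in E\}$. For $A\subseteq M$, $A^{+E}=\{m\in M:(m\triangleleft E)\cap A\neq\emptyset\}$. $\mathcal{R}$ is right amenable if there is a finitely additive probability measure $\mu$ on the power set of $M$ such that $\mu(\{a\triangleleft\mathfrak{g}:a\in A\})=\mu(A)$ whenever $\mathfrak{g}\in G/G_0$, $A\subseteq M$ and $m\mapsto m\triangleleft\mathfrak{g}$ is injective on $A$. A right Følner net in $\mathcal{R}$ is a net $(F_i)_{i\in I}$ (over a directed set) of nonempty finite subsets of $M$ with $\lim_{i}\frac{|F_i\setminus\{m: m\triangleleft\mathfrak{g}\in F_i\}|}{|F_i|}=0$ for every $\mathfrak{g}\in G/G_0$. For $A\subseteq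 M$, $\pi_A\colon Q^M\to Q^A$ is restriction; for a net $\mathcal{F}'=(F'_i)_{i\in I}$ of nonempty finite subsets of $M$, $\mathrm{h}_{\mathcal{F}'}(X)=\limsup_{i\in I}\frac{\log|\pi_{F'_i}(X)|}{|F'_i|}$. *)

From HB Require Import structures.
From mathcomp Require Import all_boot all_order all_algebra.
From mathcomp Require Import all_classical all_reals.
From mathcomp Require Import ereal exp.
Set Implicit Arguments. Unset Strict Implicit. Unset Printing Implicit Defensive.
Import Order.TTheory GRing.Theory Num.Theory.
Local Open Scope classical_set_scope.
Local Open Scope ring_scope.

(* A cell space: a group G acting transitively on the left on a nonempty set M,
   a base point m0 and a choice of elements g_{m0,m} with g_{m0,m} |> m0 = m. *)
Record cell_space := CellSpace {
  cG : Type;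
  cmul : cG -> cG -> cG;
  cone : cG;
  cinv : cG -> cG;
  cmulA : forall x y z, cmul x (cmul y z) = cmul (cmul x y) z;
  cmul1g : forall x, cmul cone x = x;
  cmulg1 : forall x, cmul x cone = x;
  cmulVg : forall x, cmul (cinv x) x = cone;
  cmulgV : forall x, cmul x (cinv x) = cone;
  cM : Type;
  cact : cG -> cM -> cM;
  cact1 : forall m, cact cone m = m;
  cactM : forall g h m, cact (cmul g h) m = cact g (cact h m);
  ctransitive : forall m m', exists g, cact g m = m';
  cm0 : cM;
  cgsel : cM -> cG;
  cgselP : forall m, cact (cgsel m) cm0 = m
}.

Section CellSpaceDefs.
Variable S : cell_space.
Local Notation G := (cG S).
Local Notation M := (cM S).

Definition stab0 : set G := [set g | cact g (cm0 S) = cm0 S].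

(* Left cosets g G_0 are represented by their elements g : G.
   right semi-action  m <| g G_0 := g_{m0,m} g |> m0  (independent of the
   representative g of the coset). *)
Definition rsemi (m : M) (g : G) : M := cact (cmul (cgsel m) g) (cm0 S).

Definition plus_set (A : set M) (E : set G) : set M :=
  [set m | exists2 e, E e & A (rsemi m e)].

Definition right_amenable (R : realType) : Prop :=
  exists mu : set M -> R,
    [/\ (forall A, 0 <= mu A),
        mu setT = 1,
        (forall A B, A `&` B = set0 -> mu (A `|` B) = mu A + mu B) &
        (forall (g : G) (A : set M),
            {in A &, injective (fun m => rsemi m g)} ->
            mu [set rsemi a g | a in A] = mu A)].
End CellSpaceDefs.

Definition ncard {T} (A : set T) : nat := xget 0%N [set n | (A #= `I_n)%card].

Definition directed (I : Type) (le : I -> I -> Prop) : Prop :=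
  [/\ inhabited I, (forall i, le i i),
      (forall i j k, le i j -> le j k -> le i k) &
      (forall i j, exists k, le i k /\ le j k)].

Definition net_to0 (R : realType) (I : Type) (le : I -> I -> Prop) (a : I -> R) :=
  forall eps : R, 0 < eps -> exists i0, forall i, le i0 i -> `|a i| < eps.

Definition net_limsup (R : realType) (I : Type) (le : I -> I -> Prop) (a : I -> R)
  : \bar R :=
  ereal_inf [set ereal_sup [set (a j)%:E | j in [set j | le i j]] | i in setT].

Definition right_folner_net (S : cell_space) (R : realType) (I : Type)
  (le : I -> I -> Prop) (F : I -> set (cM S)) : Prop :=
  [/\ forall i, finite_set (F i),
      forall i, F i !=set0 &
      forall g : cG S,
        net_to0 le (fun i => (ncard (F i `\` [set m | F i (rsemi m g)]))%:R
                             / (ncard (F i))%:R : R)].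

Definition proj_conf {M Q : Type} (A : set M) (X : set (M -> Q))
  : set ({m : M | A m} -> Q) :=
  [set (fun m => x (proj1_sig m)) | x in X].

Definition net_entropy (R : realType) {M Q : Type} (I : Type) (le : I -> I -> Prop)
  (F : I -> set M) (X : set (M -> Q)) : \bar R :=
  net_limsup le (fun i => ln (ncard (@proj_conf M Q (F i) X))%:R / (ncard (F i))%:R).

Arguments stab0 : clear implicits.
Arguments rsemi : clear implicits.
Arguments plus_set : clear implicits.
Arguments right_amenable : clear implicits.
Arguments right_folner_net : clear implicits.
Arguments net_entropy R {M Q I} le F X.

From HB Require Import structures.
From mathcomp Require Import all_boot all_order all_algebra.
From mathcomp Require Import all_classical all_reals.
From mathcomp Require Import ereal exp.
From mathcomp Require Import zify finmap.
Import Order.TTheory GRing.Theory Num.Theory.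
Local Open Scope classical_set_scope.
Local Open Scope ring_scope.
Set Implicit Arguments. Unset Strict Implicit. Unset Printing Implicit Defensive.

(** Every point of [F^{+E}] outside [F] is reached from a point of [F] that is
    pushed out of [F] by one of finitely many elements [g_{m0,n}], [n] ranging
    over [(G_0 E^-1) |> m0]. By the Følner property these boundary points are
    [o(|F|)], and each of them multiplies the number of patterns by at most
    [|Q|]; hence [log |pi_{F^{+E}}(X)| / |F^{+E}|] exceeds
    [log |pi_F(X)| / |F|] by a quantity tending to [0]. *)

Section Ncard.
Local Open Scope card_scope.

Lemma ncardE T (A : set T) n : A #= `I_n -> ncard A = n.
Proof.
move=> An; apply: xget_unique => // m /= Am.
by apply/card_eq_II; rewrite card_eq_sym in Am; exact: card_eq_trans Am An.
Qed.

Lemma ncard_II n : ncard `I_n = n.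
Proof. exact: ncardE. Qed.

Lemma ncard0 T : ncard (@set0 T) = 0%N.
Proof. by apply: ncardE; rewrite II0. Qed.

Lemma ncardP T (A : set T) : finite_set A -> A #= `I_(ncard A).
Proof. by move=> [n An]; rewrite (ncardE An). Qed.

Lemma ncard_gt0 T (A : set T) : finite_set A -> A !=set0 -> (0 < ncard A)%N.
Proof.
move=> fA [x Ax]; rewrite lt0n; apply/eqP => A0.
by have := ncardP fA; rewrite A0 II0 card_eq0 => /eqP A_eq0; rewrite A_eq0 in Ax.
Qed.

Lemma card_le_leq_ncard T U (A : set T) (B : set U) :
  A #<= B -> finite_set B -> (ncard A <= ncard B)%N.
Proof.
move=> AB fB; have fA := card_le_finite AB fB.
by rewrite -card_le_II -(card_le_eql (ncardP fA)) -(card_le_eqr (ncardP fB)).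
Qed.

Lemma card_le_in T U (f : T -> U) (A : set T) (B : set U) :
  {in A &, injective f} -> (forall x, A x -> B (f x)) -> A #<= B.
Proof.
move=> f_inj fAB; rewrite -(card_le_eql (inj_card_eq f_inj)).
by apply: subset_card_le => _ [x Ax <-]; exact: fAB.
Qed.

Lemma subset_leq_ncard T (A A' : set T) :
  A `<=` A' -> finite_set A' -> (ncard A <= ncard A')%N.
Proof. by move=> AA'; apply/card_le_leq_ncard/subset_card_le. Qed.

Lemma leq_ncard_image T U (f : T -> U) (A : set T) :
  finite_set A -> (ncard (f @` A) <= ncard A)%N.
Proof. exact/card_le_leq_ncard/card_image_le. Qed.

Lemma leq_ncard_setU T (A A' : set T) : finite_set A -> finite_set A' ->
  (ncard (A `|` A') <= ncard A + ncard A')%N.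
Proof.
move=> fA fA'; have fAA' : finite_set (A `|` A') by rewrite finite_setU.
rewrite -(@card_fset_set {classic T} _ _ (ncardP fA)).
rewrite -(@card_fset_set {classic T} _ _ (ncardP fA')).
rewrite -(@card_fset_set {classic T} _ _ (ncardP fAA')).
by rewrite (@fset_setU {classic T}) // leq_card_fsetU.
Qed.

Lemma finite_big_setU T (I : Type) (s : seq I) (F : I -> set T) :
  (forall i, finite_set (F i)) -> finite_set (\big[setU/set0]_(i <- s) F i).
Proof.
by move=> fF; elim: s => [|i s fs]; rewrite ?big_nil ?big_cons ?finite_setU.
Qed.

Lemma leq_ncard_big_setU T (I : Type) (s : seq I) (F : I -> set T) :
  (forall i, finite_set (F i)) ->
  (ncard (\big[setU/set0]_(i <- s) F i) <= \sum_(i <- s) ncard (F i))%N.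
Proof.
move=> fF; elim: s => [|i s IHs]; first by rewrite !big_nil ncard0.
rewrite !big_cons; apply: leq_trans (leq_ncard_setU (fF i) (finite_big_setU s fF)) _.
by rewrite leq_add2l.
Qed.

Lemma leq_ncard_pair (T U : Type) (C : finType) (A : set T) (B : set U)
    (f : T -> U) (g : T -> C) :
  finite_set B -> (forall x, A x -> B (f x)) ->
  {in A &, injective (fun x => (f x, g x))} ->
  (ncard A <= ncard B * #|C|)%N.
Proof.
move=> /ncardP /card_set_bijP[h [h_fun h_inj _]] fAB fg_inj.
set n := ncard B; set k := #|C|.
pose code x := (h (f x) * k + enum_rank (g x))%N.
rewrite -[X in (_ <= X)%N]ncard_II; apply: card_le_leq_ncard (finite_II _).
apply: (@card_le_in _ _ code) => [x x' xA x'A eq_code | x xA].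
  apply: fg_inj => //.
  have k_gt0 : (0 < k)%N := leq_ltn_trans (leq0n _) (ltn_ord (enum_rank (g x))).
  have eq_h : h (f x) = h (f x').
    move/(congr1 (divn^~ k)): eq_code.
    by rewrite !divnMDl // !divn_small ?ltn_ord // !addn0.
  have eq_g : enum_rank (g x) = enum_rank (g x').
    apply: val_inj; move/(congr1 (modn^~ k)): eq_code.
    by rewrite !modnMDl !modn_small.
  have eq_f : f x = f x' by apply: h_inj => //; apply/mem_set/fAB/set_mem.
  by rewrite eq_f (enum_rank_inj eq_g).
have hn : (h (f x) < n)%N := h_fun _ (fAB x xA).
have : ((h (f x)).+1 * k <= n * k)%N by rewrite leq_mul2r hn orbT.
have : (enum_rank (g x) < k)%N := ltn_ord _.
by rewrite mulSn /code /=; lia.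
Qed.

End Ncard.

Section Counting.
Variables (M : Type) (Q : finType).

Lemma restriction_code (A B : set M) : B `<=` A -> finite_set B ->
  exists code : ({m | A m} -> Q) -> {ffun 'I_(ncard B) -> Q},
    forall y y', code y = code y' ->
      forall m (Am : A m), B m -> y (exist _ m Am) = y' (exist _ m Am).
Proof.
move=> BA /ncardP /card_set_bijP[f [f_fun f_inj f_surj]].
have pick (i : 'I_(ncard B)) : {m | B m & f m = i} := cid2 (f_surj _ (ltn_ord i)).
exists (fun y => [ffun i => y (exist _ (s2val (pick i)) (BA _ (s2valP (pick i))))]).
move=> y y' eq_code m Am Bm.
have := congr1 (fun c : {ffun _ -> Q} => c (Ordinal (f_fun _ Bm))) eq_code.
rewrite !ffunE; case: (pick _) => m' Bm' /= fm'.
have eq_m : m' = m by apply: f_inj => //; exact: mem_set.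
move: (BA _ _); rewrite eq_m => Am'.
by rewrite (Prop_irrelevance Am' Am).
Qed.

Lemma finite_proj_conf (A : set M) (X : set (M -> Q)) :
  finite_set A -> finite_set (@proj_conf _ _ A X).
Proof.
move=> fA; have [code codeP] := restriction_code (@subset_refl _ A) fA.
apply: card_le_finite (@finite_finset _ [set: {ffun 'I_(ncard A) -> Q}]).
apply: (@card_le_in _ _ code) => // y y' _ _ /codeP eq_y.
by apply: funext => -[m Am]; exact: eq_y.
Qed.

Lemma leq_ncard_proj_conf (F P : set M) (X : set (M -> Q)) :
  F `<=` P -> finite_set P ->
  (ncard (@proj_conf _ _ P X)
   <= ncard (@proj_conf _ _ F X) * #|Q| ^ ncard (P `\` F))%N.
Proof.
move=> FP fP; have DP := @subDsetl _ P F.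
have [code codeP] := restriction_code DP (sub_finite_set DP fP).
pose restr (y : {m | P m} -> Q) (z : {m | F m}) :=
  y (exist _ (sval z) (FP _ (svalP z))).
rewrite -[ncard (P `\` F)]card_ord -card_ffun.
apply: (leq_ncard_pair (f := restr) (g := code)).
- exact: finite_proj_conf (sub_finite_set FP fP).
- by move=> _ [x Xx <-]; exists x.
- move=> y y' _ _ [/(congr1 (fun r => r (exist _ _ _))) eq_restr eq_code].
  apply: funext => -[m Pm]; have [Fm|nFm] := pselect (F m); last exact: codeP.
  have := eq_restr m Fm; rewrite /restr /=.
  by move: (FP _ _) => Pm'; rewrite (Prop_irrelevance Pm' Pm).
Qed.

End Counting.

Section Nets.
Variables (R : realType) (I : Type) (le : I -> I -> Prop).
Hypothesis dir : directed le.

Lemma net_to0D (a b : I -> R) :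
  net_to0 le a -> net_to0 le b -> net_to0 le (fun i => a i + b i).
Proof.
case: dir => _ _ trans up a0 b0 eps eps_gt0.
have eps2_gt0 : 0 < eps / 2 by rewrite divr_gt0.
have [i1 Hi1] := a0 _ eps2_gt0; have [i2 Hi2] := b0 _ eps2_gt0.
have [k [i1k i2k]] := up i1 i2.
exists k => i ki; apply: le_lt_trans (ler_normD _ _) _.
by rewrite (splitr eps) ltrD ?Hi1 ?Hi2 //; [exact: trans i1k ki | exact: trans i2k ki].
Qed.

Lemma net_to0_sum (J : Type) (s : seq J) (a : J -> I -> R) :
  (forall j, net_to0 le (a j)) -> net_to0 le (fun i => \sum_(j <- s) a j i).
Proof.
move=> a0; elim: s => [|j s IHs].
  have [[i0] _ _ _] := dir.
  by move=> eps eps_gt0; exists i0 => i _; rewrite big_nil normr0.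
move=> eps /(net_to0D (a0 j) IHs)[i0 Hi0].
by exists i0 => i /Hi0; rewrite big_cons.
Qed.

Lemma net_to0Ml (c : R) (a : I -> R) :
  net_to0 le a -> net_to0 le (fun i => c * a i).
Proof.
move=> a0 eps eps_gt0; have c1_gt0 : 0 < `|c| + 1 by rewrite ltr_pwDr.
have [i0 Hi0] := a0 _ (divr_gt0 eps_gt0 c1_gt0).
exists i0 => i /Hi0 ai_lt; rewrite normrM.
apply: (@le_lt_trans _ _ ((`|c| + 1) * `|a i|)); first by rewrite ler_wpM2r ?lerDl.
by rewrite -ltr_pdivlMl // mulrC.
Qed.

Lemma net_limsup_le_to0 (a b c : I -> R) :
  (forall i, a i <= b i + c i) -> net_to0 le c ->
  (net_limsup le a <= net_limsup le b)%E.
Proof.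
case: dir => _ _ trans up abc c0.
apply: le_ereal_inf_tmp => _ [i _ <-]; apply/lee_addgt0Pr => eps /c0[i0 Hi0].
have [k [ik i0k]] := up i i0.
apply: (@le_trans _ _ (ereal_sup [set (a j)%:E | j in [set j | le k j]])).
  by apply: ereal_inf_lbound; exists k.
apply: ge_ereal_sup => _ [j kj <-].
apply: (@le_trans _ _ ((b j)%:E + eps%:E)%E).
  rewrite -EFinD lee_fin; apply: le_trans (abc j) _; rewrite lerD2l.
  by apply/ltW; apply: le_lt_trans (ler_norm _) (Hi0 j _); exact: trans i0k kj.
by rewrite leeD2r //; apply: ereal_sup_ubound; exists j => //; exact: trans ik kj.
Qed.

End Nets.

Lemma ln_nat_ge0 (R : realType) (n : nat) : 0 <= ln (n%:R : R).
Proof. by case: n => [|n]; [rewrite ln0 | apply: ln_ge0; rewrite ler1n]. Qed.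

Lemma ln_leq_mul_expn (R : realType) (a b q d : nat) :
  (0 < q)%N -> (a <= b * q ^ d)%N -> ln (a%:R : R) <= ln b%:R + d%:R * ln q%:R.
Proof.
move=> q_gt0 ab; have [->|a_gt0] := posnP a.
  by rewrite ln0 // addr_ge0 ?mulr_ge0 ?ln_nat_ge0.
have b_gt0 : (0 < b)%N by move: (leq_trans a_gt0 ab); rewrite muln_gt0 => /andP[].
have qd_gt0 : (0 < q ^ d)%N by rewrite expn_gt0 q_gt0.
apply: (@le_trans _ _ (ln (b * q ^ d)%:R)).
  by rewrite ler_ln ?posrE ?ltr0n ?muln_gt0 ?b_gt0 // ler_nat.
by rewrite natrM lnM ?posrE ?ltr0n // natrX lnXn ?ltr0n // mulr_natl.
Qed.

Lemma ln_ratio_le (R : realType) (a b q d p f e : nat) :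
  (0 < q)%N -> (a <= b * q ^ d)%N -> (0 < f <= p)%N -> (d <= e)%N ->
  ln (a%:R : R) / p%:R <= ln b%:R / f%:R + ln q%:R * (e%:R / f%:R).
Proof.
move=> q_gt0 ab /andP[f_gt0 fp] de.
apply: (@le_trans _ _ (ln a%:R / f%:R)).
  rewrite ler_wpM2l ?ln_nat_ge0 // lef_pV2 ?posrE ?ltr0n ?(leq_trans f_gt0) //.
  by rewrite ler_nat.
rewrite mulrA -mulrDl ler_wpM2r ?invr_ge0 //.
apply: le_trans (ln_leq_mul_expn R q_gt0 ab) _.
by rewrite lerD2l mulrC ler_wpM2l ?ln_nat_ge0 // ler_nat.
Qed.

Section CellSpace.
Variable S : cell_space.
Local Notation G := (cG S).
Local Notation M := (cM S).
Local Notation m0 := (cm0 S).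

Lemma cactK (g : G) : cancel (cact g) (cact (cinv g)).
Proof. by move=> m; rewrite -cactM cmulVg cact1. Qed.

Lemma cactVK (g : G) : cancel (cact (cinv g)) (cact g).
Proof. by move=> m; rewrite -cactM cmulgV cact1. Qed.

Lemma rsemi_stab m e : stab0 S e -> rsemi S m e = m.
Proof. by rewrite /rsemi cactM => ->; rewrite cgselP. Qed.

Lemma rsemi_cgsel t n : rsemi S t (cgsel n) = cact (cgsel t) n.
Proof. by rewrite /rsemi cactM cgselP. Qed.

Definition return_points (E : set G) : set M :=
  [set cact (cmul s (cinv e)) m0 | s in stab0 S & e in E].

Definition escaping (A : set M) (g : G) : set M := A `\` [set m | A (rsemi S m g)].

Lemma finite_return_points (E : set G) :
  finite_set (stab0 S) -> finite_set [set cact e m0 | e in E] ->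
  finite_set (return_points E).
Proof.
move=> fS fE.
pose reps p := [set e | E e /\ cact e m0 = p].
pose rep p := @xget {classic G} (cone S) (reps p).
pose point (sp : G * M) := cact (cmul sp.1 (cinv (rep sp.2))) m0.
apply: (@sub_finite_set _ _ (point @` (stab0 S `*` [set cact e m0 | e in E]))); last first.
  by apply: finite_image; exact: finite_setX.
move=> _ [s stab_s [e Ee <-]].
have [_ rep_m0] : reps (cact e m0) (rep (cact e m0)) by apply: xgetPex; exists e.
exists (cmul (cmul s (cinv e)) (rep (cact e m0)), cact e m0); last first.
  by rewrite /point /= -cmulA cmulgV cmulg1.
split; last by exists e.
by rewrite /stab0 /= !cactM rep_m0 cactK.
Qed.

Lemma rsemi_return (E : set G) m e : E e ->
  exists2 n, return_points E n & rsemi S (rsemi S m e) (cgsel n) = m.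
Proof.
move=> Ee; set t := rsemi S m e.
have t_def : cact (cgsel m) (cact e m0) = t by rewrite /t /rsemi cactM.
set s := cmul (cinv (cgsel t)) (cmul (cgsel m) e).
have stab_s : stab0 S s.
  by rewrite /stab0 /= !cactM t_def -[X in cact _ X]cgselP cactK.
exists (cact (cmul s (cinv e)) m0); first by exists s => //; exists e.
by rewrite rsemi_cgsel !cactM cactVK cactVK cgselP.
Qed.

Lemma subset_plus_set (A : set M) (E : set G) :
  (exists2 e, E e & stab0 S e) -> A `<=` plus_set S A E.
Proof. by move=> [e Ee stab_e] m Am; exists e; rewrite ?rsemi_stab. Qed.

Lemma plus_setD_cover (A : set M) (E : set G) :
  plus_set S A E `\` A `<=`
  \bigcup_(n in return_points E)
    (fun t => rsemi S t (cgsel n)) @` escaping A (cgsel n).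
Proof.
move=> m [[e Ee At] nAm]; have [n Kn back] := rsemi_return m Ee.
by exists n => //; exists (rsemi S m e) => //; split=> //=; rewrite back.
Qed.

Lemma proj_conf_ratio_plus_set_le (R : realType) (Q : finType) (X : set (M -> Q))
    (A : set M) (E : set G) (s : seq {classic M}) :
  (0 < #|Q|)%N -> finite_set A -> A !=set0 -> (exists2 e, E e & stab0 S e) ->
  return_points E = [set` s] ->
  ln (ncard (@proj_conf _ _ (plus_set S A E) X))%:R / (ncard (plus_set S A E))%:R
  <= ln (ncard (@proj_conf _ _ A X))%:R / (ncard A)%:R
     + ln #|Q|%:R *
       \sum_(n <- s) (ncard (escaping A (cgsel n)))%:R / (ncard A)%:R :> R.
Proof.
move=> Q_gt0 fA A0 E0 Ks; set P := plus_set S A E.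
pose out n := (fun t => rsemi S t (cgsel n)) @` escaping A (cgsel n).
have fesc n : finite_set (escaping A (cgsel n)).
  exact: sub_finite_set (@subDsetl _ _ _) fA.
have fout n : finite_set (out n) := finite_image _ (fesc n).
have cover : P `\` A `<=` \big[setU/set0]_(n <- s) out n.
  by rewrite -bigcup_seq -Ks; exact: plus_setD_cover.
have AP : A `<=` P := subset_plus_set E0.
have fP : finite_set P.
  apply: (@sub_finite_set _ _ (A `|` \big[setU/set0]_(n <- s) out n)).
    by move=> m Pm; have [Am|nAm] := pselect (A m); [left | right; exact: cover].
  by rewrite finite_setU; split; [exact: fA | exact: finite_big_setU].
rewrite -mulr_suml -natr_sum.
apply: ln_ratio_le Q_gt0 (leq_ncard_proj_conf X AP fP) _ _.
  by rewrite ncard_gt0 //= subset_leq_ncard.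
apply: leq_trans (subset_leq_ncard cover (finite_big_setU s fout)) _.
apply: leq_trans (leq_ncard_big_setU s fout) _.
by apply: leq_sum => n _; exact: leq_ncard_image.
Qed.

End CellSpace.

Theorem lemma11 (R : realType) (S : cell_space) (Q : finType)
  (I : Type) (le : I -> I -> Prop) (F : I -> set (cM S))
  (X : set (cM S -> Q)) (E : set (cG S)) :
  right_amenable S R ->
  finite_set (stab0 S) ->
  (0 < #|Q|)%N ->
  directed le ->
  right_folner_net S R I le F ->
  finite_set [set cact e (cm0 S) | e in E] ->
  (exists2 e, E e & stab0 S e) ->
  (net_entropy R le (fun i => plus_set S (F i) E) X <= net_entropy R le F X)%E.
Proof.
move=> _ fS Q_gt0 dir [fF neF folner] fE E0.
have [s Ks] := (@finite_seqP {classic (cM S)} _).1 (finite_return_points fS fE).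
apply: (net_limsup_le_to0 dir
  (fun i => proj_conf_ratio_plus_set_le R X Q_gt0 (fF i) (neF i) E0 Ks)).
by apply/net_to0Ml/net_to0_sum => // n; exact: folner.
Qed.
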